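(* Let $a,b:\mathbb{Z}_{\neq 0}\to\mathbb{R}$ be even functions ($a(-r)=a(r)$, $b(-r)=b(r)$) such that $a$ is not identically zero, $b(r)\to 0$ as $r\to\infty$, and $$(u-v)\,a(u)\,a(v) + (u+v)\,a(u+v)\,\bigl(b(u)-b(v)\bigr) = 0$$ for all $u,v\in\mathbb{Z}$ with $u\neq 0$, $v\neq 0$, $u+v\neq 0$. Let $E_a=\{r\in\mathbb{Z}_{>0}: a(r)\neq 0\}$ and $E_b=\{r\in\mathbb{Z}_{>0}: b(r)\neq 0\}$. Then exactly one of the following holds: 1. $E_a=\{R\}$ for some integer $R>0$ and $E_b=\emptyset$ (i.e. $b\equiv 0$); 2. there is an integer $R>0$ with $E_a=E_b=\{nR: n\in\mathbb{Z}_{>0}\}$, and either (a) $a(nR)=b(nR)=\frac{1}{n^2}a(R)$ for all $n\in\mathbb{Z}_{>0}$, or (b) $a(nR)=\frac{(-1)^{n+1}}{n^2}a(R)$ and $b(nR)=-\frac{1}{n^2}a(R)$ for all $n\in\mathbb{Z}_{>0}$. Moreover, the Hamiltonian of case (b) is unitarily equivalent to one of the form (a) under conjugation by $\hat U=\prod_{k=0}^{R-1}\prod_{n\in\mathbb{Z}}2\hat S^z_{2nR+k}$.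
   Context: Interpretation: $a,b$ are the coupling functions of the spin-$1/2$ chain $\hat H=\sum_{m<n}a(m-n)(\hat S^x_m\hat S^x_n+\hat S^y_m\hat S^y_n)+b(m-n)\hat S^z_m\hat S^z_n$ on $\mathbb{Z}$, and the displayed functional equation is exactly the condition that the total spin current $\hat J=\sum_{n}\sum_{r\ge1} r\,a(r)(\hat S^x_n\hat S^y_{n+r}-\hat S^y_n\hat S^x_{n+r})$ commutes with $\hat H$. Case 1 corresponds to $R$ decoupled nearest-neighbour XX chains on the sublattices $R\mathbb{Z}+k$; case 2(a) to $R$ decoupled Haldane–Shastry chains on those sublattices. *)

From HB Require Import structures.
From mathcomp Require Import all_boot all_order all_algebra.
From mathcomp Require Import all_classical all_reals all_analysis.
Set Implicit Arguments. Unset Strict Implicit. Unset Printing Implicit Defensive.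
Import Order.TTheory GRing.Theory Num.Theory.
Import numFieldTopology.Exports numFieldNormedType.Exports.
Local Open Scope ring_scope.
Local Open Scope classical_set_scope.

(* Couplings a, b : Z\{0} -> R are modelled as functions int -> R whose value
   at 0 is irrelevant (never used by any hypothesis or conclusion). *)

Definition supp_pos (R : realType) (f : int -> R) : set int :=
  [set r : int | 0 < r /\ f r != 0].

Definition pos_multiples (R0 : int) : set int :=
  [set r : int | exists n : nat, (0 < n)%N /\ r = n%:Z * R0].

(* The functional equation (commutation of the spin current with H). *)
Definition current_conserved (R : realType) (a b : int -> R) : Prop :=
  forall u v : int, u != 0 -> v != 0 -> u + v != 0 ->
    (u - v)%:~R * a u * a v + (u + v)%:~R * a (u + v) * (b u - b v) = 0.

(* Effect on the XY coupling of conjugating H by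
   U = prod_{k=0}^{R-1} prod_{n in Z} 2 S^z_{2nR+k}:
   the operators S^x_m, S^y_m change sign iff floor(m/R) is even, so the
   coupling between sites m, m' with m - m' = j R is multiplied by (-1)^j;
   b is unchanged.  (Off multiples of R the coupling a vanishes in case 2.) *)
Definition twist (R : realType) (R0 : int) (a : int -> R) : int -> R :=
  fun r => (-1) ^ (r %/ R0)%Z * a r.

Definition form_a (R : realType) (R0 : int) (a b : int -> R) : Prop :=
  forall n : nat, (0 < n)%N ->
    a (n%:Z * R0) = a R0 / (n%:R) ^+ 2 /\ b (n%:Z * R0) = a R0 / (n%:R) ^+ 2.

Definition form_b (R : realType) (R0 : int) (a b : int -> R) : Prop :=
  forall n : nat, (0 < n)%N ->
    a (n%:Z * R0) = (-1) ^+ n.+1 / (n%:R) ^+ 2 * a R0 /\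
    b (n%:Z * R0) = - (a R0 / (n%:R) ^+ 2).

Definition case1 (R : realType) (a b : int -> R) : Prop :=
  exists R0 : int, 0 < R0 /\ supp_pos a = [set R0] /\ supp_pos b = set0.

Definition case2 (R : realType) (a b : int -> R) : Prop :=
  exists R0 : int, 0 < R0 /\
    supp_pos a = pos_multiples R0 /\ supp_pos b = pos_multiples R0 /\
    (form_a R0 a b \/
     (form_b R0 a b /\ form_a R0 (twist R0 a) b)).

(* Let k be the least positive integer with a k <> 0.  The equation at (n, -k)
   shows that the support of a lies in kZ, and the equation at (u + k, -u)
   shows that b is constant along every progression m + jk on which a never
   takes two consecutive nonzero values; since b tends to 0, b vanishes there.
   If a (2k) = 0 the support of a is {k} and b = 0 on positive integers.
   Otherwise a does not vanish on kZ, and after rescaling by k the equations at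
   (m, 1) and (m, -1) make g m = m^2 a m 2-periodic; the equations at (2, 1),
   (3, 1), (3, 2) force g 2 = s * g 1 with s = 1 or -1, and then the equation
   at (m, 1) gives b m = c + s * a 1 / m^2, where c = 0 because b tends to 0. *)

From HB Require Import structures.
From mathcomp Require Import all_boot all_order all_algebra.
From mathcomp Require Import all_classical all_reals all_analysis.
From mathcomp Require Import zify ring.
Import Order.TTheory GRing.Theory Num.Theory.
Import numFieldTopology.Exports numFieldNormedType.Exports.
Local Open Scope ring_scope.
Local Open Scope classical_set_scope.
Set Implicit Arguments. Unset Strict Implicit.

Lemma cvg_comp_ge (T : ptopologicalType) (u : nat -> T) (f : nat -> nat) (l : T) :
  (forall n, n <= f n)%N -> u @ \oo --> l -> u \o f @ \oo --> l.
Proof.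
move=> f_ge u_l; apply: cvg_comp u_l => P [N _ NP].
by exists N => // n /= Nn; apply: NP; apply: leq_trans (f_ge n).
Qed.

Lemma cvg_cst_eq (R : numFieldType) (c l : R) : (fun=> c) @ \oo --> l -> c = l.
Proof. exact: (cvg_unique _ (cvg_cst c)). Qed.

Lemma cvg0_periodic_eq0 (R : numFieldType) (u : nat -> R) (m k : nat) :
  (0 < k)%N -> u @ \oo --> 0 -> (forall j, u (m + j * k)%N = u m) -> u m = 0.
Proof.
move=> k_gt0 u0 u_per; apply: cvg_cst_eq.
have -> : (fun=> u m) = u \o (fun j => m + j * k)%N by apply: funext => j /=.
by apply: cvg_comp_ge u0 => j; nia.
Qed.

Lemma inverse_square_cvg0 (R : realType) (d : R) :
  (fun n => d / n.+1%:R ^+ 2) @ \oo --> 0.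
Proof.
have -> : (fun n => d / n.+1%:R ^+ 2) = (fun n => d * (harmonic n * harmonic n)).
  by apply: funext => n; rewrite /= expr2 invfM.
rewrite -(mulr0 d) -(mulr0 0).
exact: cvgMr (cvgM cvg_harmonic cvg_harmonic).
Qed.

Lemma cvg0_inverse_square_const_eq0 (R : realType) (u : nat -> R) (c d : R) :
  u @ \oo --> 0 -> (forall n, u n = c + d / n.+1%:R ^+ 2) -> c = 0.
Proof.
move=> u0 u_eq; apply: cvg_cst_eq.
have -> : (fun=> c) = (fun n => u n - d / n.+1%:R ^+ 2).
  by apply: funext => n; rewrite u_eq addrK.
by rewrite -(subr0 0); apply: cvgB u0 (inverse_square_cvg0 d).
Qed.

Lemma elim_common_difference (F : comRingType) (mm mp p q r A D : F) :
  mm * q * A + mp * r * D = 0 -> mp * q * A + mm * p * D = 0 ->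
  q * A * (mp ^+ 2 * r - mm ^+ 2 * p) = 0.
Proof.
move=> e1 e2; rewrite (_ : q * A * _ =
  mp * r * (mp * q * A + mm * p * D) - mm * p * (mm * q * A + mp * r * D)).
  by rewrite e1 e2 !mulr0 subr0.
ring.
Qed.

Lemma sqr_eq_of_relations (F : numFieldType) (A G a2 a3 a4 a5 b1 b2 b3 : F) :
  A != 0 ->
  2%:R ^+ 2 * a2 = G -> 3%:R ^+ 2 * a3 = A -> 4%:R ^+ 2 * a4 = G -> 5%:R ^+ 2 * a5 = A ->
  (2%:R - 1%:R) * a2 * A + (2%:R + 1%:R) * a3 * (b2 - b1) = 0 ->
  (3%:R - 1%:R) * a3 * A + (3%:R + 1%:R) * a4 * (b3 - b1) = 0 ->
  (3%:R - 2%:R) * a3 * a2 + (3%:R + 2%:R) * a5 * (b3 - b2) = 0 ->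
  G ^+ 2 = A ^+ 2.
Proof.
move=> A0 e2 e3 e4 e5 h1 h2 h3.
have a2E : a2 = G / 4 by rewrite -e2; field.
have a3E : a3 = A / 9 by rewrite -e3; field.
have a4E : a4 = G / 16 by rewrite -e4; field.
have a5E : a5 = A / 25 by rewrite -e5; field.
have {}h1 : G * A / 4 + A * (b2 - b1) / 3 = 0 by rewrite -h1 a2E a3E; field.
have {}h2 : 2 * A ^+ 2 / 9 + G * (b3 - b1) / 4 = 0 by rewrite -h2 a3E a4E; field.
have {}h3 : A * G / 36 + A * (b3 - b2) / 5 = 0 by rewrite -h3 a2E a3E a5E; field.
(* A linear combination in which b1, b2, b3 cancel. *)
have : A * (G ^+ 2 - A ^+ 2) = 27 / 8 * G * (G * A / 4 + A * (b2 - b1) / 3)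
    - 9 / 2 * A * (2 * A ^+ 2 / 9 + G * (b3 - b1) / 4)
    + 45 / 8 * G * (A * G / 36 + A * (b3 - b2) / 5) by field.
rewrite h1 h2 h3 !mulr0 subr0 addr0 => /eqP.
by rewrite mulf_eq0 (negbTE A0) subr_eq0 => /eqP.
Qed.

Lemma difference_of_relation (F : numFieldType) (m p q A D s : F) :
  m != 0 -> p != 0 -> s ^+ 2 = 1 -> (m + 1) ^+ 2 * q = s * (m ^+ 2 * p) ->
  (m - 1) * p * A + (m + 1) * q * D = 0 -> D = s * A / m ^+ 2 - s * A.
Proof.
move=> m0 p0 s2 eq_q rel; apply/eqP; rewrite -subr_eq0.
have : p * m ^+ 2 * (D - (s * A / m ^+ 2 - s * A)) =
    s * (m + 1) * ((m - 1) * p * A + (m + 1) * q * D)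
    - s * ((m + 1) ^+ 2 * q - s * (m ^+ 2 * p)) * D - (s ^+ 2 - 1) * m ^+ 2 * p * D.
  by field.
rewrite rel eq_q s2 !subrr !mulr0 !mul0r !subr0 => /eqP.
by rewrite !mulf_eq0 (negbTE p0) (negbTE m0).
Qed.

Section Conservation.
Variables (R : realType) (a b : int -> R).
Hypothesis cc : current_conserved a b.

Lemma current_conserved_scale (k : int) :
  k != 0 -> current_conserved (fun r => a (r * k)) (fun r => b (r * k)).
Proof.
move=> k0 u v u0 v0 uv0 /=.
have := cc (mulf_neq0 u0 k0) (mulf_neq0 v0 k0).
rewrite -mulrBl -mulrDl !intrM => /(_ (mulf_neq0 uv0 k0)) e.
apply: (mulIf (_ : k%:~R != 0)); first by rewrite intr_eq0.
by rewrite mul0r -e; ring.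
Qed.

Lemma conserved_a_add_neq0 (u v : int) : u != 0 -> v != 0 -> u + v != 0 -> u != v ->
  a u != 0 -> a v != 0 -> a (u + v) != 0.
Proof.
move=> u0 v0 uv0 uv au av; apply/eqP => auv.
move: (cc u0 v0 uv0); rewrite auv mulr0 mul0r addr0 => /eqP.
by rewrite !mulf_eq0 intr_eq0 subr_eq0 (negbTE uv) (negbTE au) (negbTE av).
Qed.

Hypothesis a_even : forall r : int, r != 0 -> a (- r) = a r.
Hypothesis b_even : forall r : int, r != 0 -> b (- r) = b r.

Lemma a_absz (x : int) : a `|x|%N%:Z = a x.
Proof.
by rewrite abszE; case: (ger0P x) => // x_lt0; rewrite a_even ?ltr0_neq0.
Qed.

Lemma conserved_b_shift (u k : int) : u != 0 -> u + k != 0 -> k != 0 -> a k != 0 ->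
  a (u + k) * a u = 0 -> b (u + k) = b u.
Proof.
move=> u0 uk0 k0 ak a_uk_u.
have nu0 : - u != 0 by rewrite oppr_eq0.
have k_eq : u + k + - u = k by rewrite addrAC subrr add0r.
have := cc uk0 nu0; rewrite k_eq => /(_ k0).
rewrite a_even // b_even // mulrAC -mulrA [a u * _]mulrC a_uk_u mulr0 add0r.
by move/eqP; rewrite !mulf_eq0 intr_eq0 (negbTE k0) (negbTE ak) subr_eq0 => /eqP.
Qed.

Lemma conserved_nat (m n : nat) : (0 < n < m)%N ->
  (m%:R - n%:R) * a m%:Z * a n%:Z + (m%:R + n%:R) * a (m + n)%N%:Z * (b m%:Z - b n%:Z) = 0.
Proof.
move=> /andP[n_gt0 nm].
have := @cc m n; rewrite intrB intrD -PoszD; apply; lia.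
Qed.

Lemma conserved_nat_neg1 (m : nat) : (1 < m)%N ->
  (m%:R + 1) * a m%:Z * a 1 + (m%:R - 1) * a m.-1%:Z * (b m%:Z - b 1) = 0.
Proof.
move=> m_gt1; have := @cc m (-1); rewrite a_even // b_even // intrB intrD.
have -> : m%:Z + -1 = m.-1%:Z by lia.
rewrite (_ : (-1)%:~R = -1 :> R) // opprK; apply; lia.
Qed.

End Conservation.

Section UnitPeriod.
Variables (R : realType) (a b : int -> R).
Hypothesis a_even : forall r : int, r != 0 -> a (- r) = a r.
Hypothesis b_even : forall r : int, r != 0 -> b (- r) = b r.
Hypothesis cc : current_conserved a b.
Hypothesis a_pos_neq0 : forall n : nat, (0 < n)%N -> a n%:Z != 0.
Hypothesis b_cvg0 : (fun n => b n.+1%:Z) @ \oo --> 0.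

Let g (n : nat) : R := n%:R ^+ 2 * a n%:Z.

Lemma g_period2 (n : nat) : (0 < n)%N -> g n.+2 = g n.
Proof.
move=> n_gt0.
have e1 := conserved_nat cc (m := n.+1) (n := 1) n_gt0.
have e2 := conserved_nat_neg1 cc a_even b_even (m := n.+1) n_gt0.
rewrite -natr1 addrK natr1 in e1 e2.
move/eqP: (elim_common_difference e1 e2).
rewrite !mulf_eq0 !(negbTE (a_pos_neq0 _)) // subr_eq0 natr1 => /eqP.
by rewrite addn1.
Qed.

Lemma g1 : g 1 = a 1.
Proof. by rewrite /g mulr1n expr1n mul1r. Qed.

Lemma g2_sqr : g 2 ^+ 2 = a 1 ^+ 2.
Proof.
have g3 : g 3 = a 1 by rewrite g_period2 // g1.
apply: (@sqr_eq_of_relations _ (a 1%:Z) (g 2) _ _ _ _ _ _ _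
  (a_pos_neq0 (n := 1) isT) _ _ _ _ (conserved_nat cc (m := 2) (n := 1) isT)
  (conserved_nat cc (m := 3) (n := 1) isT) (conserved_nat cc (m := 3) (n := 2) isT)).
- by [].
- exact: g3.
- exact: (g_period2 (n := 2) isT).
- by rewrite -g3; exact: (g_period2 (n := 3) isT).
Qed.

Lemma g_sign : exists2 s : R, s ^+ 2 = 1 & forall n, (0 < n)%N -> g n = s ^+ n.+1 * a 1.
Proof.
have a1_neq0 : a 1 != 0 := a_pos_neq0 (n := 1) isT.
set s := g 2 / a 1.
have s2 : s ^+ 2 = 1 by rewrite expr_div_n g2_sqr divff // expf_neq0.
have sE (n : nat) : s ^+ n.+2 = s ^+ n by rewrite -addn2 exprD s2 mulr1.
exists s => // n; case: n => // n _.
suff /(_ n)[] : forall n, g n.+1 = s ^+ n.+2 * a 1 /\ g n.+2 = s ^+ n.+3 * a 1 by [].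
elim=> [|m [IH1 IH2]].
  by split; rewrite sE ?expr0 ?mul1r ?g1 ?expr1 ?divfK.
by split=> //; rewrite g_period2 // IH1 !sE.
Qed.

Lemma b_inverse_square (s : R) : s ^+ 2 = 1 ->
    (forall n, (0 < n)%N -> g n = s ^+ n.+1 * a 1) ->
  forall n, (0 < n)%N -> b n%:Z = s * a 1 / n%:R ^+ 2.
Proof.
move=> s2 gE.
have b_shape n : (0 < n)%N -> b n%:Z = b 1 - s * a 1 + s * a 1 / n%:R ^+ 2.
  case: n => [|[|n]] // _; first by rewrite mulr1n expr1n divr1 subrK.
  have eq_q : (n.+2%:R + 1) ^+ 2 * a n.+3%:Z = s * (n.+2%:R ^+ 2 * a n.+2%:Z).
    by rewrite natr1; rewrite [LHS]gE // [X in s * X]gE // mulrA -exprS.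
  have rel := conserved_nat cc (m := n.+2) (n := 1) isT; rewrite addn1 in rel.
  have m_neq0 : n.+2%:R != 0 :> R by rewrite pnatr_eq0.
  have D_eq := difference_of_relation m_neq0 (a_pos_neq0 (n := n.+2) isT) s2 eq_q rel.
  by rewrite -(subrK (b 1) (b _)) D_eq; ring.
have c0 : b 1 - s * a 1 = 0.
  by apply: (cvg0_inverse_square_const_eq0 b_cvg0) => n; apply: b_shape.
by move=> n n_gt0; rewrite b_shape // c0 add0r.
Qed.

Lemma unit_period_couplings : exists2 s : R, s ^+ 2 = 1 &
  forall n : nat, (0 < n)%N ->
    a n%:Z = s ^+ n.+1 * a 1 / n%:R ^+ 2 /\ b n%:Z = s * a 1 / n%:R ^+ 2.
Proof.
have [s s2 gE] := g_sign; exists s => // n n_gt0.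
split; last exact: b_inverse_square.
by rewrite -gE // /g; field; rewrite pnatr_eq0 -lt0n.
Qed.

End UnitPeriod.

Lemma case1_not_case2 (R : realType) (a b : int -> R) : case1 a b -> ~ case2 a b.
Proof.
case=> R1 [_ [sa _]] [K [K_gt0 [saK _]]].
have : supp_pos a K /\ supp_pos a (2%:Z * K).
  by rewrite saK; split; [exists 1%N; rewrite mul1r | exists 2%N].
rewrite sa => -[/= K_eq K2_eq]; move: K2_eq; rewrite K_eq; lia.
Qed.

Lemma pos_multiples_nat (k n : nat) : (0 < n)%N -> (k %| n)%N -> pos_multiples k n%:Z.
Proof.
move=> n_gt0 /dvdnP[q nq]; exists q; split; last by rewrite nq PoszM.
by move: n_gt0; rewrite nq; case: (q).
Qed.

Lemma case2_of_forms (R : realType) (a b : int -> R) (K : int) (s : R) :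
    0 < K -> a K != 0 -> s ^+ 2 = 1 ->
    supp_pos a `<=` pos_multiples K -> supp_pos b `<=` pos_multiples K ->
    (forall n : nat, (0 < n)%N ->
       a (n%:Z * K) = s ^+ n.+1 * a K / n%:R ^+ 2 /\ b (n%:Z * K) = s * a K / n%:R ^+ 2) ->
  case2 a b.
Proof.
move=> K_gt0 aK s2 sa sb forms.
have s_neq0 : s != 0 by apply/eqP => s0; move/eqP: s2; rewrite s0 expr0n eq_sym oner_eq0.
have inv_sq_neq0 n : (0 < n)%N -> (n%:R ^+ 2 : R)^-1 != 0.
  by move=> n_gt0; rewrite invr_eq0 expf_neq0 // pnatr_eq0 -lt0n.
have supp_eq (f : int -> R) : supp_pos f `<=` pos_multiples K ->
    (forall n : nat, (0 < n)%N -> f (n%:Z * K) != 0) -> supp_pos f = pos_multiples K.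
  move=> sf f_neq0; apply/seteqP; split=> // _ [n [n_gt0 ->]].
  by split; [rewrite mulr_gt0 // ltz_nat | exact: f_neq0].
exists K; split=> //; split.
  apply: supp_eq sa _ => n n_gt0; rewrite (forms n n_gt0).1.
  by rewrite !mulf_neq0 ?expf_neq0 ?inv_sq_neq0.
split.
  apply: supp_eq sb _ => n n_gt0; rewrite (forms n n_gt0).2.
  by rewrite !mulf_neq0 ?inv_sq_neq0.
move/eqP: s2; rewrite sqrf_eq1 => /orP[/eqP s1|/eqP sN1]; [left|right].
  by move=> n /forms[aE bE]; rewrite s1 expr1n !mul1r in aE bE.
split=> n /forms[aE bE]; rewrite sN1 in aE bE.
  by rewrite mulrAC mulN1r mulNr in aE bE; split.
rewrite /twist mulzK ?gt_eqF // divzz gt_eqF // expr1z -exprnP.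
by rewrite aE bE exprSr !mulrA -expr2 sqrr_sign mul1r.
Qed.

Section MinimalPeriod.
Variables (R : realType) (a b : int -> R).
Hypothesis a_even : forall r : int, r != 0 -> a (- r) = a r.
Hypothesis b_even : forall r : int, r != 0 -> b (- r) = b r.
Hypothesis b_cvg0 : (fun n : nat => b n%:Z) @ \oo --> 0.
Hypothesis cc : current_conserved a b.
Variable k : nat.
Hypothesis k_gt0 : (0 < k)%N.
Hypothesis ak : a k%:Z != 0.
Hypothesis k_min : forall n : nat, (0 < n)%N -> a n%:Z != 0 -> (k <= n)%N.

Lemma dvdn_of_a_neq0 (n : nat) : (0 < n)%N -> a n%:Z != 0 -> (k %| n)%N.
Proof.
elim/ltn_ind: n => n IH n_gt0 an.
have kn := k_min n_gt0 an.
have [->|nk] := eqVneq n k; first exact: dvdnn.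
rewrite -(subnK kn) dvdn_addr //; apply: IH; [lia | lia |].
rewrite -subzn //; apply: (conserved_a_add_neq0 cc) => //; try lia.
by rewrite a_even //; lia.
Qed.

Lemma a_double_neq0 (n : nat) : (1 < n)%N -> a (n%:Z * k%:Z) != 0 -> a (2%:Z * k%:Z) != 0.
Proof.
elim: n => // n IH n_gt0 an; have [n1|n_gt1] := eqVneq n 1%N; first by rewrite n1 in an.
apply: IH _ _; first lia.
have -> : n%:Z * k%:Z = n.+1%:Z * k%:Z + - k%:Z by lia.
by apply: (conserved_a_add_neq0 cc) => //; try lia; rewrite a_even //; lia.
Qed.

Lemma a_mul_neq0 : a (2%:Z * k%:Z) != 0 -> forall n : nat, (0 < n)%N -> a (n%:Z * k%:Z) != 0.
Proof.
move=> a2k; case=> // -[_|n _]; first by rewrite mul1r.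
elim: n => // n IH; have -> : n.+3%:Z * k%:Z = n.+2%:Z * k%:Z + k%:Z by lia.
by apply: (conserved_a_add_neq0 cc) => //; lia.
Qed.

Lemma b_eq0_of_a_progression (m : nat) : (0 < m)%N ->
    (forall j : nat, a (m + j.+1 * k)%N%:Z * a (m + j * k)%N%:Z = 0) ->
  b m%:Z = 0.
Proof.
move=> m_gt0 a_prod; apply: (cvg0_periodic_eq0 k_gt0 b_cvg0).
elim=> [|j IH]; first by rewrite mul0n addn0.
rewrite -IH mulSnr addnA PoszD; apply: (conserved_b_shift cc a_even b_even) => //; try lia.
by rewrite -PoszD -addnA -mulSnr.
Qed.

Lemma b_eq0_of_not_dvdn (m : nat) : (0 < m)%N -> ~~ (k %| m)%N -> b m%:Z = 0.
Proof.
move=> m_gt0 km; apply: b_eq0_of_a_progression => // j.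
rewrite (_ : a (m + j * k)%N%:Z = 0) ?mulr0 //; apply/eqP; apply: contraNT km => am.
by rewrite -(dvdn_addl _ (dvdn_mull j (dvdnn k))) dvdn_of_a_neq0 //; lia.
Qed.

Lemma case1_of_a_double_eq0 : a (2%:Z * k%:Z) = 0 -> case1 a b.
Proof.
move=> a2k.
have supp_k (n : nat) : (0 < n)%N -> a n%:Z != 0 -> n = k.
  move=> n_gt0 an; have /dvdnP[q nq] := dvdn_of_a_neq0 n_gt0 an.
  case: q nq => [|[|q]] nq; [lia | by rewrite nq mul1n |].
  by move: an; rewrite nq PoszM => /(@a_double_neq0 q.+2 isT); rewrite a2k eqxx.
have b0 (m : nat) : (0 < m)%N -> b m%:Z = 0.
  move=> m_gt0; apply: b_eq0_of_a_progression => // j.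
  have [->|a1] := eqVneq (a (m + j.+1 * k)%N%:Z) 0; first by rewrite mul0r.
  have [->|a0] := eqVneq (a (m + j * k)%N%:Z) 0; first by rewrite mulr0.
  have := supp_k _ _ a1; have := supp_k _ _ a0; lia.
exists k%:Z; split; first lia.
split; apply/seteqP; split=> r //=.
- by case: r => [r [r_gt0 ar]|r []//]; rewrite (supp_k r).
- by move=> ->; split=> //; lia.
- by case: r => [r [r_gt0]|r []//]; rewrite b0 ?eqxx.
Qed.

Lemma case2_of_a_double_neq0 : a (2%:Z * k%:Z) != 0 -> case2 a b.
Proof.
move=> a2k; have K_neq0 : k%:Z != 0 by lia.
have scaled_even (f : int -> R) : (forall r, r != 0 -> f (- r) = f r) ->
    forall r, r != 0 -> f (- r * k%:Z) = f (r * k%:Z).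
  by move=> f_even r r0; rewrite mulNr f_even // mulf_neq0.
have scaled_cvg0 : (fun n => b (n.+1%:Z * k%:Z)) @ \oo --> 0.
  have -> : (fun n => b (n.+1%:Z * k%:Z)) = (fun n => b n%:Z) \o (fun n => n.+1 * k)%N.
    by apply: funext => n /=; rewrite PoszM.
  by apply: cvg_comp_ge b_cvg0 => n; nia.
have [s s2 forms] := unit_period_couplings (scaled_even _ a_even) (scaled_even _ b_even)
  (current_conserved_scale cc K_neq0) (a_mul_neq0 a2k) scaled_cvg0.
apply: (case2_of_forms (K := k%:Z) (s := s)) => //.
- case=> [r [r_gt0 ar]|r []//]; apply: pos_multiples_nat => //; exact: dvdn_of_a_neq0.
- case=> [r [r_gt0 br]|r []//]; apply: pos_multiples_nat => //.
  by apply: contraNT br => kr; rewrite b_eq0_of_not_dvdn.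
- by move=> n /forms; rewrite mul1r.
Qed.

End MinimalPeriod.

Theorem theorem1 (R : realType) (a b : int -> R) :
  (forall r : int, r != 0 -> a (- r) = a r) ->
  (forall r : int, r != 0 -> b (- r) = b r) ->
  (exists r : int, r != 0 /\ a r != 0) ->
  (fun n : nat => b n%:Z) @ \oo --> 0 ->
  current_conserved a b ->
  ((case1 a b /\ ~ case2 a b) \/ (~ case1 a b /\ case2 a b)).
Proof.
move=> a_even b_even [r [r_neq0 ar]] b_cvg0 cc.
have a_pos : exists n : nat, (0 < n)%N && (a n%:Z != 0).
  by exists `|r|%N; rewrite absz_gt0 r_neq0 (a_absz a_even).
have [k /andP[k_gt0 ak] k_min] := ex_minnP a_pos.
have {}k_min n : (0 < n)%N -> a n%:Z != 0 -> (k <= n)%N.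
  by move=> n_gt0 an; apply: k_min; rewrite n_gt0 an.
suff [c1|c2] : case1 a b \/ case2 a b.
- by left; split=> //; apply: case1_not_case2.
- by right; split=> // /case1_not_case2.
have [a2k|a2k] := eqVneq (a (2%:Z * k%:Z)) 0.
- by left; apply: (case1_of_a_double_eq0 a_even b_even b_cvg0 cc k_gt0 ak k_min).
- by right; apply: (case2_of_a_double_neq0 a_even b_even b_cvg0 cc k_gt0 ak k_min).
Qed.
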